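(* For all $\mu>0$, $x\ge 0$ and $y>0$, $$\frac{P_{\mu+1}(x,y)}{P_{\mu}(x,y)}<c_{\mu+1}(x,y).$$
   Context: For $\mu>0$, $x>0$, $y\ge0$, the generalized Marcum $P$-function is $P_{\mu}(x,y)=x^{\frac12(1-\mu)}\int_0^{y} t^{\frac12(\mu-1)}e^{-t-x}I_{\mu-1}(2\sqrt{xt})\,dt$ ($I_\nu$ the modified Bessel function of the first kind); at $x=0$ it is defined by continuity, $P_\mu(0,y)=\gamma(\mu,y)/\Gamma(\mu)$ with $\gamma(\mu,y)=\int_0^y t^{\mu-1}e^{-t}dt$. For $x>0$, $y>0$, $c_{\mu}(x,y)=\sqrt{y/x}\,I_{\mu}(2\sqrt{xy})/I_{\mu-1}(2\sqrt{xy})$, and $c_\mu(0,y)=y/\mu$ (its limit as $x\to0^+$). *)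

From Stdlib Require Import Reals Factorial.
From Coquelicot Require Import Coquelicot.
Open Scope R_scope.

Definition Gamma_fun (a : R) : R :=
  RInt_gen (fun t => Rpower t (a - 1) * exp (- t)) (at_right 0) (Rbar_locally p_infty).

Definition lower_gamma (a y : R) : R :=
  RInt_gen (fun t => Rpower t (a - 1) * exp (- t)) (at_right 0) (at_point y).

Definition BesselI (nu z : R) : R :=
  Series (fun k => Rpower (z / 2) (2 * INR k + nu)
                   / (INR (fact k) * Gamma_fun (INR k + nu + 1))).

(* Generalized Marcum P-function; at x = 0 defined by continuity. *)
Definition MarcumP (mu x y : R) : R :=
  if Req_EM_T x 0 then lower_gamma mu y / Gamma_fun mu
  else Rpower x ((1 - mu) / 2) *
       RInt_gen (fun t => Rpower t ((mu - 1) / 2) * exp (- t - x)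
                          * BesselI (mu - 1) (2 * sqrt (x * t)))
                (at_right 0) (at_point y).

Definition c_fun (mu x y : R) : R :=
  if Req_EM_T x 0 then y / mu
  else sqrt (y / x) * BesselI mu (2 * sqrt (x * y)) / BesselI (mu - 1) (2 * sqrt (x * y)).

From Stdlib Require Import Reals Lra Lia Factorial Classical.
From Coquelicot Require Import Coquelicot.
Open Scope R_scope.

(* Let [e_m(x) = sum_(k <= m) x^k / k!] and [(a)_n] be the Pochhammer symbol.  Term-wise
   differentiation shows that [e^(-y) y^mu S_mu(x,y)], with
   [S_mu(x,y) = sum_m e_m(x) y^m / (mu)_(m+1)], is a primitive of the Marcum integrand, so
   [P_mu(x,y) = e^(-x) / Gamma(mu) * e^(-y) y^mu S_mu(x,y)]; the same computation at [x = 0]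
   yields [Gamma] as the limit of an increasing primitive and its recurrence.  Writing
   [I_nu] through [Phi_b(s) = sum_k s^k / (k! (b)_k)] gives
   [c_(mu+1) = y Phi_(mu+2)(xy) / ((mu+1) Phi_(mu+1)(xy))], so the claim becomes
   [(mu+1) S_(mu+1) Phi_(mu+1) < mu S_mu Phi_(mu+2)].  In the Cauchy product the coefficient
   of [y^n] in the difference is [sum_k (2k - n) a_k b_(n-k) / (mu+1)], where
   [a_k / b_k = k! e_k(x) / x^k] is nondecreasing; pairing [k] with [n - k] makes every
   coefficient nonnegative, and the coefficient of [y] is positive. *)

Fixpoint pochhammer (a : R) (n : nat) : R :=
  match n with O => 1 | S n => pochhammer a n * (a + INR n) end.

Lemma pochhammer_pos a n : 0 < a -> 0 < pochhammer a n.
Proof.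
  intros Ha; induction n as [|n IH]; simpl; [lra|].
  apply Rmult_lt_0_compat; [lra|]. pose proof (pos_INR n); lra.
Qed.

Lemma pochhammer_S_shift a n : pochhammer a (S n) = a * pochhammer (a + 1) n.
Proof.
  induction n as [|n IH]; [simpl; ring|].
  change (pochhammer a (S (S n))) with (pochhammer a (S n) * (a + INR (S n))).
  rewrite IH. simpl pochhammer. rewrite S_INR. ring.
Qed.

Definition exp_term (x : R) (k : nat) : R := x ^ k / INR (fact k).
Definition exp_partial (x : R) (m : nat) : R := sum_f_R0 (exp_term x) m.

Lemma exp_term_S x k : exp_term x (S k) = x / INR (S k) * exp_term x k.
Proof.
  unfold exp_term. rewrite fact_simpl, mult_INR. simpl pow.
  pose proof (INR_fact_lt_0 k). pose proof (lt_0_INR (S k) (Nat.lt_0_succ k)).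
  field; lra.
Qed.

Lemma exp_term_nonneg x k : 0 <= x -> 0 <= exp_term x k.
Proof.
  intros Hx. apply Rdiv_le_0_compat; [now apply pow_le | apply INR_fact_lt_0].
Qed.

Lemma exp_partial_S x m : exp_partial x (S m) = exp_partial x m + exp_term x (S m).
Proof. reflexivity. Qed.

Lemma exp_partial_ge_1 x m : 0 <= x -> 1 <= exp_partial x m.
Proof.
  intros Hx; induction m as [|m IH].
  - unfold exp_partial, exp_term; simpl; lra.
  - rewrite exp_partial_S. pose proof (exp_term_nonneg x (S m) Hx). lra.
Qed.

Lemma exp_partial_0_l m : exp_partial 0 m = 1.
Proof.
  induction m as [|m IH].
  - unfold exp_partial, exp_term; simpl; field.
  - rewrite exp_partial_S, IH. unfold exp_term. simpl. unfold Rdiv. ring.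
Qed.

Lemma exp_term_le_partial x m : 0 <= x -> exp_term x m <= exp_partial x m.
Proof.
  intros Hx; destruct m as [|m]; [unfold exp_partial; simpl; lra|].
  rewrite exp_partial_S. pose proof (exp_partial_ge_1 x m Hx); lra.
Qed.

Lemma exp_term_S_le x m : 0 <= x -> exp_term x (S m) <= x * exp_partial x m.
Proof.
  intros Hx. rewrite exp_term_S.
  pose proof (exp_term_le_partial x m Hx) as Hle. pose proof (exp_term_nonneg x m Hx).
  assert (HS : 1 <= INR (S m)) by (rewrite S_INR; pose proof (pos_INR m); lra).
  assert (Hinv : / INR (S m) <= 1) by (rewrite <- Rinv_1; apply Rinv_le_contravar; lra).
  assert (0 < / INR (S m)) by (apply Rinv_0_lt_compat; lra).
  unfold Rdiv. rewrite Rmult_assoc. apply Rmult_le_compat_l; [exact Hx|].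
  apply Rle_trans with (exp_term x m); [|exact Hle].
  rewrite <- (Rmult_1_l (exp_term x m)) at 2. apply Rmult_le_compat_r; lra.
Qed.

Lemma exp_partial_S_ge x m : 0 <= x -> x * exp_partial x m <= INR (S m) * exp_partial x (S m).
Proof.
  intros Hx. induction m as [|m IH].
  - unfold exp_partial, exp_term; simpl. lra.
  - assert (HS : INR (S (S m)) * exp_term x (S (S m)) = x * exp_term x (S m)).
    { rewrite exp_term_S. assert (0 < INR (S (S m))) by (apply lt_0_INR; lia). field. lra. }
    pose proof (exp_partial_ge_1 x (S m) Hx).
    rewrite (exp_partial_S x (S m)), Rmult_plus_distr_l, HS, (S_INR (S m)).
    rewrite (exp_partial_S x m) at 1. rewrite Rmult_plus_distr_l. lra.
Qed.

(* [e_k(x) / (x^k / k!)] is nondecreasing in [k]. *)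
Lemma exp_partial_term_cross x j d :
  0 <= x -> exp_partial x j * exp_term x (j + d) <= exp_partial x (j + d) * exp_term x j.
Proof.
  intros Hx. induction d as [|d IH]; [rewrite Nat.add_0_r; lra|].
  rewrite Nat.add_succ_r, exp_term_S.
  set (n := (j + d)%nat) in *.
  pose proof (exp_partial_S_ge x n Hx) as Hup.
  assert (HS : 0 < INR (S n)) by (apply lt_0_INR; lia).
  pose proof (exp_partial_ge_1 x j Hx). pose proof (exp_term_nonneg x j Hx) as Htj.
  pose proof (exp_term_nonneg x n Hx).
  assert (Hq : 0 <= x / INR (S n)) by (apply Rdiv_le_0_compat; lra).
  apply Rle_trans with (x / INR (S n) * (exp_partial x n * exp_term x j)).
  - replace (exp_partial x j * (x / INR (S n) * exp_term x n))
      with (x / INR (S n) * (exp_partial x j * exp_term x n)) by ring.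
    now apply Rmult_le_compat_l.
  - replace (x / INR (S n) * (exp_partial x n * exp_term x j))
      with (x * exp_partial x n / INR (S n) * exp_term x j) by (field; lra).
    apply Rmult_le_compat_r; [exact Htj|].
    apply Rmult_le_reg_r with (INR (S n)); [exact HS|].
    unfold Rdiv. rewrite Rmult_assoc, Rinv_l by lra. lra.
Qed.

Lemma is_lim_seq_div_S c : is_lim_seq (fun n => c / INR (S n)) 0.
Proof.
  assert (H : is_lim_seq (fun n => / INR (S n)) 0).
  { apply (is_lim_seq_incr_1 (fun n => / INR n)).
    replace (Finite 0) with (Rbar_inv p_infty) by reflexivity.
    apply is_lim_seq_inv; [apply is_lim_seq_INR | discriminate]. }
  apply (is_lim_seq_scal_l _ c) in H. simpl in H. rewrite Rmult_0_r in H.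
  exact H.
Qed.

Lemma CV_radius_infinite_ratio (a : nat -> R) (c : R) :
  (forall n, 0 < a n) -> (forall n, a (S n) / a n <= c / INR (S n)) ->
  CV_radius a = p_infty.
Proof.
  intros Hpos Hratio. apply CV_radius_infinite_DAlembert.
  - intros n; specialize (Hpos n); lra.
  - apply is_lim_seq_le_le with (u := fun _ => 0) (w := fun n => c / INR (S n)).
    + intros n.
      assert (Hq : 0 <= a (S n) / a n) by (apply Rdiv_le_0_compat; [left|]; apply Hpos).
      rewrite Rabs_pos_eq by exact Hq. split; [exact Hq | apply Hratio].
    + apply is_lim_seq_const.
    + apply is_lim_seq_div_S.
Qed.

Lemma ex_pseries_entire (c : nat -> R) y : CV_radius c = p_infty -> ex_pseries c y.
Proof. intros H; apply CV_radius_inside; rewrite H; exact I. Qed.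

Lemma is_series_PSeries_entire (c : nat -> R) y :
  CV_radius c = p_infty -> is_series (fun k => c k * y ^ k) (PSeries c y).
Proof.
  intros H. eapply is_series_ext; [|exact (PSeries_correct c y (ex_pseries_entire c y H))].
  intros k. rewrite pow_n_pow. apply Rmult_comm.
Qed.

Lemma is_series_pos (t : nat -> R) (l : R) (n : nat) :
  is_series t l -> (forall k, 0 <= t k) -> 0 < t n -> 0 < l.
Proof.
  intros Hs Ht Hn.
  assert (Hpart : forall m, (n <= m)%nat -> t n <= sum_f_R0 t m).
  { intros m Hm. induction Hm as [|m Hm IH].
    - destruct n as [|n]; simpl; [lra|]. pose proof (cond_pos_sum t n Ht). lra.
    - simpl. specialize (Ht (S m)). lra. }
  assert (Hle : Rbar_le (t n) l).
  { apply (is_lim_seq_le_loc (fun _ => t n) (sum_n t)); [|apply is_lim_seq_const | exact Hs].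
    exists n. intros m Hm. rewrite sum_n_Reals. now apply Hpart. }
  simpl in Hle. lra.
Qed.

Lemma PSeries_pos (c : nat -> R) y :
  CV_radius c = p_infty -> (forall n, 0 < c n) -> 0 <= y -> 0 < PSeries c y.
Proof.
  intros Hc Hpos Hy. apply (is_series_pos _ _ 0 (is_series_PSeries_entire c y Hc)).
  - intros k. apply Rmult_le_pos; [left; apply Hpos | now apply pow_le].
  - rewrite pow_O, Rmult_1_r. apply Hpos.
Qed.

(* [Phi_b] of the header (see [BesselI_eq]). *)
Definition bessel_coef (b : R) (k : nat) : R := / (INR (fact k) * pochhammer b k).
Definition bessel_phi (b s : R) : R := PSeries (bessel_coef b) s.

Lemma bessel_coef_pos b k : 0 < b -> 0 < bessel_coef b k.
Proof.
  intros Hb. apply Rinv_0_lt_compat, Rmult_lt_0_compat;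
    [apply INR_fact_lt_0 | now apply pochhammer_pos].
Qed.

Lemma CV_radius_bessel_coef b : 0 < b -> CV_radius (bessel_coef b) = p_infty.
Proof.
  intros Hb. apply CV_radius_infinite_ratio with (c := / b).
  - intros; now apply bessel_coef_pos.
  - intros n. unfold bessel_coef. rewrite fact_simpl, mult_INR. simpl pochhammer.
    pose proof (INR_fact_lt_0 n). pose proof (pochhammer_pos b n Hb). pose proof (pos_INR n).
    assert (HS : 0 < INR (S n)) by (apply lt_0_INR; lia).
    replace (/ (INR (S n) * INR (fact n) * (pochhammer b n * (b + INR n)))
               / / (INR (fact n) * pochhammer b n))
      with (/ (INR (S n) * (b + INR n))) by (field; repeat split; lra).
    replace (/ b / INR (S n)) with (/ (INR (S n) * b)) by (field; lra).
    apply Rinv_le_contravar; [apply Rmult_lt_0_compat; lra|].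
    apply Rmult_le_compat_l; lra.
Qed.

Lemma bessel_phi_0 b : bessel_phi b 0 = 1.
Proof. unfold bessel_phi. rewrite PSeries_0. unfold bessel_coef. simpl. field. Qed.

Lemma bessel_phi_pos b s : 0 < b -> 0 <= s -> 0 < bessel_phi b s.
Proof.
  intros Hb Hs. apply PSeries_pos; [now apply CV_radius_bessel_coef | | exact Hs].
  intros; now apply bessel_coef_pos.
Qed.

Lemma PSeries_bessel_coef_scal b x y :
  PSeries (fun n => x ^ n * bessel_coef b n) y = bessel_phi b (x * y).
Proof.
  apply Series_ext. intros n. rewrite Rpow_mult_distr.
  unfold scal; simpl; unfold mult; simpl. ring.
Qed.

(* [S_a] of the header and the primitive [e^(-y) y^a S_a(x,y)] (see [MarcumP_eq]). *)
Definition marcum_coef (a x : R) (m : nat) : R := exp_partial x m / pochhammer a (S m).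
Definition marcum_series (a x y : R) : R := PSeries (marcum_coef a x) y.
Definition marcum_primitive (a x y : R) : R := exp (- y) * Rpower y a * marcum_series a x y.

Lemma marcum_coef_pos a x m : 0 < a -> 0 <= x -> 0 < marcum_coef a x m.
Proof.
  intros Ha Hx. apply Rdiv_lt_0_compat; [|now apply pochhammer_pos].
  pose proof (exp_partial_ge_1 x m Hx); lra.
Qed.

Lemma CV_radius_marcum_coef a x : 0 < a -> 0 <= x -> CV_radius (marcum_coef a x) = p_infty.
Proof.
  intros Ha Hx. apply CV_radius_infinite_ratio with (c := 1 + x).
  - intros; now apply marcum_coef_pos.
  - intros n. unfold marcum_coef.
    change (pochhammer a (S (S n))) with (pochhammer a (S n) * (a + INR (S n))).
    pose proof (pochhammer_pos a (S n) Ha). pose proof (exp_partial_ge_1 x n Hx).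
    pose proof (exp_term_S_le x n Hx). pose proof (exp_term_nonneg x (S n) Hx).
    rewrite exp_partial_S.
    assert (HS : 0 < INR (S n)) by (apply lt_0_INR; lia).
    replace ((exp_partial x n + exp_term x (S n)) / (pochhammer a (S n) * (a + INR (S n)))
               / (exp_partial x n / pochhammer a (S n)))
      with ((exp_partial x n + exp_term x (S n)) / exp_partial x n / (a + INR (S n)))
      by (field; repeat split; lra).
    unfold Rdiv. apply Rmult_le_compat.
    + apply Rmult_le_pos; [lra | left; apply Rinv_0_lt_compat; lra].
    + left; apply Rinv_0_lt_compat; lra.
    + apply Rmult_le_reg_r with (exp_partial x n); [lra|].
      rewrite Rmult_assoc, Rinv_l by lra. nra.
    + apply Rinv_le_contravar; lra.
Qed.

Lemma marcum_series_pos a x y : 0 < a -> 0 <= x -> 0 <= y -> 0 < marcum_series a x y.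
Proof.
  intros Ha Hx Hy. apply PSeries_pos; [now apply CV_radius_marcum_coef | | exact Hy].
  intros; now apply marcum_coef_pos.
Qed.

Lemma marcum_primitive_pos a x y : 0 < a -> 0 <= x -> 0 < y -> 0 < marcum_primitive a x y.
Proof.
  intros Ha Hx Hy. apply Rmult_lt_0_compat; [apply Rmult_lt_0_compat; apply exp_pos|].
  apply marcum_series_pos; lra.
Qed.

Lemma marcum_series_ode a x y : 0 < a -> 0 <= x ->
  a * marcum_series a x y - y * marcum_series a x y
    + y * PSeries (PS_derive (marcum_coef a x)) y = bessel_phi a (x * y).
Proof.
  intros Ha Hx. set (s := marcum_coef a x).
  assert (Rs : CV_radius s = p_infty) by now apply CV_radius_marcum_coef.
  assert (E1 : ex_pseries s y) by now apply ex_pseries_entire.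
  assert (E2 : ex_pseries (PS_derive s) y)
    by (apply ex_pseries_entire; rewrite CV_radius_derive; exact Rs).
  unfold marcum_series. fold s.
  rewrite <- PSeries_scal, <- !PSeries_incr_1.
  unfold Rminus. rewrite <- PSeries_opp.
  rewrite <- PSeries_plus.
  2:{ apply ex_pseries_scal; [apply Rmult_comm | exact E1]. }
  2:{ now apply ex_pseries_opp, ex_pseries_incr_1. }
  rewrite <- PSeries_plus.
  2:{ apply ex_pseries_plus; [apply ex_pseries_scal; [apply Rmult_comm | exact E1]|].
      now apply ex_pseries_opp, ex_pseries_incr_1. }
  2:{ now apply ex_pseries_incr_1. }
  rewrite <- PSeries_bessel_coef_scal. apply PSeries_ext. intros n.
  unfold PS_plus, PS_scal, PS_opp, PS_incr_1, PS_derive, plus, opp, scal; simpl;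
    unfold mult; simpl. unfold s, marcum_coef, bessel_coef.
  destruct n as [|m].
  - unfold exp_partial, exp_term; simpl. field. lra.
  - change (pochhammer a (S (S m))) with (pochhammer a (S m) * (a + INR (S m))).
    rewrite exp_partial_S. unfold exp_term.
    pose proof (pochhammer_pos a (S m) Ha). pose proof (INR_fact_lt_0 (S m)).
    assert (0 < INR (S m)) by (apply lt_0_INR; lia).
    change (match m with 0%nat => 1 | S _ => INR m + 1 end) with (INR (S m)).
    field. repeat split; lra.
Qed.

Lemma is_derive_marcum_primitive a x y : 0 < a -> 0 <= x -> 0 < y ->
  is_derive (marcum_primitive a x) y (Rpower y (a - 1) * exp (- y) * bessel_phi a (x * y)).
Proof.
  intros Ha Hx Hy. unfold marcum_primitive.
  assert (D1 : is_derive (fun t => exp (- t)) y (- exp (- y))) by (auto_derive; [exact I | ring]).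
  assert (D2 : is_derive (fun t => Rpower t a) y (a * Rpower y (a - 1)))
    by (apply is_derive_Reals, derivable_pt_lim_power; exact Hy).
  assert (D3 : is_derive (marcum_series a x) y (PSeries (PS_derive (marcum_coef a x)) y)).
  { apply is_derive_PSeries. rewrite CV_radius_marcum_coef by assumption. exact I. }
  pose proof (is_derive_mult _ _ _ _ _ (is_derive_mult _ _ _ _ _ D1 D2 Rmult_comm) D3 Rmult_comm)
    as D.
  replace (Rpower y (a - 1) * exp (- y) * bessel_phi a (x * y)) with
    ((- exp (- y) * Rpower y a + exp (- y) * (a * Rpower y (a - 1))) * marcum_series a x y
     + exp (- y) * Rpower y a * PSeries (PS_derive (marcum_coef a x)) y).
  { exact D. }
  rewrite <- (marcum_series_ode a x y Ha Hx).
  replace (Rpower y a) with (y * Rpower y (a - 1)).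
  2:{ rewrite <- (Rpower_1 y) at 1 by exact Hy. rewrite <- Rpower_plus. f_equal; ring. }
  ring.
Qed.

Lemma marcum_series_0_rec a y : 0 < a ->
  a * marcum_series a 0 y = 1 + y * marcum_series (a + 1) 0 y.
Proof.
  intros Ha. unfold marcum_series. rewrite <- PSeries_scal, PSeries_decr_1.
  2:{ apply ex_pseries_scal; [apply Rmult_comm|].
      apply ex_pseries_entire, CV_radius_marcum_coef; lra. }
  unfold PS_scal, PS_decr_1, marcum_coef. f_equal.
  - change (scal a ?v) with (a * v). rewrite exp_partial_0_l. simpl. field. lra.
  - f_equal. apply PSeries_ext. intros n. rewrite !exp_partial_0_l.
    change (scal a ?v) with (a * v). rewrite (pochhammer_S_shift a (S n)).
    pose proof (pochhammer_pos (a + 1) (S n) ltac:(lra)). field. split; lra.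
Qed.

Lemma marcum_primitive_0_rec a y : 0 < a -> 0 < y ->
  marcum_primitive (a + 1) 0 y = a * marcum_primitive a 0 y - Rpower y a * exp (- y).
Proof.
  intros Ha Hy. unfold marcum_primitive.
  rewrite Rpower_plus, Rpower_1 by exact Hy.
  replace (exp (- y) * (Rpower y a * y) * marcum_series (a + 1) 0 y)
    with (exp (- y) * Rpower y a * (y * marcum_series (a + 1) 0 y)) by ring.
  replace (y * marcum_series (a + 1) 0 y) with (a * marcum_series a 0 y - 1)
    by (rewrite marcum_series_0_rec by exact Ha; ring).
  ring.
Qed.

Lemma filterlim_Rmult {T} (F : (T -> Prop) -> Prop) {FF : Filter F} (f g : T -> R) lf lg :
  filterlim f F (locally lf) -> filterlim g F (locally lg) ->
  filterlim (fun t => f t * g t) F (locally (lf * lg)).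
Proof.
  intros Hf Hg. apply (filterlim_comp_2 f g Rmult Hf Hg).
  apply (filterlim_mult (K := R_AbsRing) lf lg).
Qed.

Lemma filterlim_Rplus {T} (F : (T -> Prop) -> Prop) {FF : Filter F} (f g : T -> R) lf lg :
  filterlim f F (locally lf) -> filterlim g F (locally lg) ->
  filterlim (fun t => f t + g t) F (locally (lf + lg)).
Proof.
  intros Hf Hg. apply (filterlim_comp_2 f g Rplus Hf Hg).
  apply (filterlim_plus (K := R_AbsRing) (V := R_NormedModule) lf lg).
Qed.

Lemma filterlim_Rpower_at_right_0 a :
  0 < a -> filterlim (fun t => Rpower t a) (at_right 0) (locally 0).
Proof.
  intros Ha. apply filterlim_ext with (fun t => exp (a * ln t)); [reflexivity|].
  apply filterlim_comp with (G := Rbar_locally m_infty); [|apply is_lim_exp_m].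
  eapply filterlim_comp; [apply is_lim_ln_0|].
  assert (Hm := filterlim_Rbar_mult_l a m_infty).
  replace (Rbar_mult a m_infty) with m_infty in Hm; [exact Hm|].
  simpl. destruct (Rle_dec 0 a) as [Ha0|]; [|exfalso; lra].
  destruct (Rle_lt_or_eq_dec 0 a Ha0); [reflexivity | exfalso; lra].
Qed.

Lemma marcum_primitive_at_right_0 a x :
  0 < a -> 0 <= x -> filterlim (marcum_primitive a x) (at_right 0) (locally 0).
Proof.
  intros Ha Hx.
  assert (Hcont : forall f : R -> R, continuous f 0 -> filterlim f (at_right 0) (locally (f 0)))
    by (intros f Hf; exact (filterlim_filter_le_1 f (filter_le_within (F := locally 0) _) Hf)).
  replace 0 with (exp (- 0) * 0 * marcum_series a x 0) at 2 by ring.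
  apply filterlim_Rmult; [exact _ | apply filterlim_Rmult; [exact _ | |] |].
  - apply (Hcont (fun y => exp (- y))), (ex_derive_continuous (fun y => exp (- y))).
    auto_derive. exact I.
  - now apply filterlim_Rpower_at_right_0.
  - apply Hcont, (ex_derive_continuous (marcum_series a x)), ex_derive_PSeries.
    rewrite CV_radius_marcum_coef by assumption. exact I.
Qed.

Definition marcum_density (a x t : R) : R :=
  Rpower t (a - 1) * exp (- t) * bessel_phi a (x * t).

Lemma continuous_marcum_density a x t : 0 < a -> 0 < t -> continuous (marcum_density a x) t.
Proof.
  intros Ha Ht. apply (ex_derive_continuous (marcum_density a x)). unfold marcum_density.
  apply ex_derive_mult; [apply ex_derive_mult|].
  - exists ((a - 1) * Rpower t (a - 1 - 1)). now apply is_derive_Reals, derivable_pt_lim_power.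
  - auto_derive; exact I.
  - apply (ex_derive_comp (bessel_phi a) (fun u => x * u)); [|auto_derive; exact I].
    apply ex_derive_PSeries. rewrite CV_radius_bessel_coef by exact Ha. exact I.
Qed.

(* The upper endpoint [Fb] is [at_point y] for [MarcumP] and [Rbar_locally p_infty]
   for [Gamma_fun]. *)
Lemma is_RInt_gen_marcum_density a x (Fb : (R -> Prop) -> Prop) l :
  0 < a -> 0 <= x -> Filter Fb -> Fb (fun b => 0 < b) ->
  filterlim (marcum_primitive a x) Fb (locally l) ->
  is_RInt_gen (marcum_density a x) (at_right 0) Fb l.
Proof.
  intros Ha Hx FF Hb Hl.
  assert (Hpos : filter_prod (at_right 0) Fb (fun ab => 0 < fst ab /\ 0 < snd ab)).
  { exists (fun u => 0 < u) (fun u => 0 < u); auto.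
    exists (mkposreal 1 Rlt_0_1). intros; assumption. }
  assert (Hin : forall ab t, 0 < fst ab /\ 0 < snd ab ->
            Rmin (fst ab) (snd ab) <= t <= Rmax (fst ab) (snd ab) -> 0 < t).
  { intros [u v] t [H1 H2] [H3 H4]; simpl in *.
    apply Rlt_le_trans with (Rmin u v); [apply Rmin_case|]; assumption. }
  assert (HD : forall t, 0 < t -> Derive (marcum_primitive a x) t = marcum_density a x t)
    by (intros t Ht; now apply is_derive_unique, is_derive_marcum_primitive).
  apply is_RInt_gen_ext with (Derive (marcum_primitive a x)).
  { apply filter_imp with (2 := Hpos). intros ab Hab t Ht.
    apply HD, (Hin ab t Hab). split; left; apply Ht. }
  replace l with (l - 0) by ring.
  apply is_RInt_gen_Derive; [| |now apply marcum_primitive_at_right_0 | exact Hl].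
  - apply filter_imp with (2 := Hpos). intros ab Hab t Ht.
    eexists. apply is_derive_marcum_primitive; [exact Ha | exact Hx | apply (Hin ab t Hab Ht)].
  - apply filter_imp with (2 := Hpos). intros ab Hab t Ht.
    pose proof (Hin ab t Hab Ht) as Htp.
    apply continuous_ext_loc with (marcum_density a x); [|now apply continuous_marcum_density].
    exists (mkposreal t Htp). intros u Hu. symmetry. apply HD.
    unfold ball in Hu; simpl in Hu; unfold AbsRing_ball, abs, minus, plus, opp in Hu; simpl in Hu.
    apply Rabs_def2 in Hu. lra.
Qed.

Lemma is_derive_nonneg_incr (f df : R -> R) (lo : R) :
  (forall t, lo < t -> is_derive f t (df t)) -> (forall t, lo < t -> 0 <= df t) ->
  forall u v, lo < u -> u <= v -> f u <= f v.
Proof.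
  intros Hd Hp u v Hu Huv.
  destruct (Req_dec u v) as [<-|Hne]; [lra|].
  destruct (MVT_gen f u v df) as [c [Hc Heq]]; rewrite Rmin_left in * by lra.
  - intros t Ht. apply Hd. lra.
  - intros t Ht. apply continuity_pt_filterlim, (ex_derive_continuous f).
    exists (df t). apply Hd. lra.
  - assert (0 <= df c) by (apply Hp; lra).
    assert (0 <= df c * (v - u)) by (apply Rmult_le_pos; lra). lra.
Qed.

Lemma incr_bounded_filterlim_p_infty (f : R -> R) (B : R) :
  (forall u v, 0 < u -> u <= v -> f u <= f v) -> (forall u, 0 < u -> f u <= B) ->
  exists l, filterlim f (Rbar_locally p_infty) (locally l) /\ (forall u, 0 < u -> f u <= l).
Proof.
  intros Hm HB.
  set (E := fun z => exists u, 0 < u /\ z = f u).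
  destruct (completeness E) as [l [Hub Hlub]].
  - exists B. intros z [u [Hu ->]]. auto.
  - exists (f 1), 1. split; [lra | reflexivity].
  - exists l. split; [|intros u Hu; apply Hub; exists u; auto].
    intros P [eps Heps].
    assert (Hex : exists u, 0 < u /\ l - eps < f u).
    { apply not_all_not_ex. intros Hno.
      assert (Hb : is_upper_bound E (l - eps)).
      { intros z [u [Hu ->]]. apply Rnot_lt_le. intros Hc. apply (Hno u); auto. }
      specialize (Hlub _ Hb). pose proof (cond_pos eps). lra. }
    destruct Hex as [u [Hu Hlu]].
    exists u. intros v Hv. apply Heps.
    assert (f u <= f v) by (apply Hm; lra).
    assert (f v <= l) by (apply Hub; exists v; split; [lra | reflexivity]).
    unfold ball; simpl; unfold AbsRing_ball, abs, minus, plus, opp; simpl.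
    apply Rabs_def1; lra.
Qed.

Lemma exp_le_compat a b : a <= b -> exp a <= exp b.
Proof.
  intros [H|<-]; [left; now apply exp_increasing | right; reflexivity].
Qed.

(* From [ln s <= s - 1] at [s = t / (2 A)] with [A = max p 1]. *)
Lemma Rpower_le_exp_half (p : R) :
  exists C, 0 < C /\ forall t, 1 <= t -> Rpower t p <= C * exp (t / 2).
Proof.
  set (A := Rmax p 1). assert (HA : 1 <= A) by apply Rmax_r. assert (HpA : p <= A) by apply Rmax_l.
  exists (exp (A * ln (2 * A))). split; [apply exp_pos|].
  intros t Ht. unfold Rpower. rewrite <- exp_plus. apply exp_le_compat.
  assert (Hln : 0 <= ln t) by (rewrite <- ln_1; apply ln_le; lra).
  assert (H1 : ln (t / (2 * A)) <= t / (2 * A) - 1).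
  { pose proof (exp_ineq1_le (ln (t / (2 * A)))) as H.
    rewrite exp_ln in H by (apply Rdiv_lt_0_compat; lra). lra. }
  rewrite ln_div in H1 by lra.
  assert (H2 : A * (ln t - ln (2 * A)) <= A * (t / (2 * A) - 1)) by (apply Rmult_le_compat_l; lra).
  replace (A * (t / (2 * A) - 1)) with (t / 2 - A) in H2 by (field; lra).
  assert (p * ln t <= A * ln t) by (apply Rmult_le_compat_r; lra). lra.
Qed.

Lemma Rpower_mul_exp_opp_le (p : R) :
  exists C, 0 < C /\ forall t, 1 <= t -> Rpower t p * exp (- t) <= C * exp (- t / 2).
Proof.
  destruct (Rpower_le_exp_half p) as [C [HC Hb]]. exists C. split; [exact HC|].
  intros t Ht. replace (C * exp (- t / 2)) with (C * exp (t / 2) * exp (- t)).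
  - apply Rmult_le_compat_r; [left; apply exp_pos | now apply Hb].
  - rewrite Rmult_assoc, <- exp_plus. do 2 f_equal. field.
Qed.

Lemma filterlim_Rpower_mul_exp_opp p :
  filterlim (fun t => Rpower t p * exp (- t)) (Rbar_locally p_infty) (locally 0).
Proof.
  destruct (Rpower_mul_exp_opp_le p) as [C [HC Hb]].
  change (filterlim (fun t => Rpower t p * exp (- t)) (Rbar_locally p_infty)
            (Rbar_locally (Finite 0))).
  apply filterlim_le_le with (f := fun _ => 0) (h := fun t => C * exp (- t / 2)).
  - exists 1. intros t Ht. split; [|apply Hb; lra].
    apply Rmult_le_pos; left; apply exp_pos.
  - apply filterlim_const.
  - change (filterlim (fun t => C * exp (- t / 2)) (Rbar_locally p_infty) (locally 0)).
    replace 0 with (C * 0) by ring.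
    apply filterlim_Rmult; [exact _ | apply filterlim_const|].
    apply filterlim_comp with (G := Rbar_locally m_infty); [|apply is_lim_exp_m].
    apply filterlim_ext with (fun t => (- / 2) * t); [intros; field|].
    assert (Hm := filterlim_Rbar_mult_l (- / 2) p_infty).
    replace (Rbar_mult (- / 2) p_infty) with m_infty in Hm; [exact Hm|].
    simpl. destruct (Rle_dec 0 (- / 2)); [exfalso; lra | reflexivity].
Qed.

Lemma is_derive_marcum_primitive_0 a t : 0 < a -> 0 < t ->
  is_derive (marcum_primitive a 0) t (Rpower t (a - 1) * exp (- t)).
Proof.
  intros Ha Ht. pose proof (is_derive_marcum_primitive a 0 t Ha (Rle_refl 0) Ht) as H.
  now rewrite Rmult_0_l, bessel_phi_0, Rmult_1_r in H.
Qed.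

Lemma marcum_primitive_0_incr a :
  0 < a -> forall u v, 0 < u -> u <= v -> marcum_primitive a 0 u <= marcum_primitive a 0 v.
Proof.
  intros Ha. apply (is_derive_nonneg_incr _ (fun t => Rpower t (a - 1) * exp (- t)) 0).
  - intros; now apply is_derive_marcum_primitive_0.
  - intros t Ht. apply Rmult_le_pos; left; apply exp_pos.
Qed.

(* For [t >= 1] the integrand is dominated by [C e^(-t/2)], so
   [marcum_primitive a 0 + 2 C e^(-t/2)] decreases there. *)
Lemma marcum_primitive_0_bounded a :
  0 < a -> exists B, forall u, 0 < u -> marcum_primitive a 0 u <= B.
Proof.
  intros Ha. destruct (Rpower_mul_exp_opp_le (a - 1)) as [C [HC Hb]].
  set (G := fun t => marcum_primitive a 0 t + 2 * C * exp (- t / 2)).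
  assert (Hdecr : forall u v, 1 < u -> u <= v -> - G u <= - G v).
  { apply (is_derive_nonneg_incr (fun t => - G t)
             (fun t => - (Rpower t (a - 1) * exp (- t)) + C * exp (- t / 2)) 1).
    - intros t Ht. unfold G.
      apply (is_derive_ext (fun s => - marcum_primitive a 0 s + (-2 * C) * exp (- s / 2)));
        [intros s; simpl; ring|].
      apply (is_derive_plus (fun s => - marcum_primitive a 0 s)).
      + apply (is_derive_opp (marcum_primitive a 0)), is_derive_marcum_primitive_0; lra.
      + auto_derive; [exact I | unfold Rdiv; field].
    - intros t Ht. specialize (Hb t (Rlt_le _ _ Ht)). lra. }
  assert (Hpos : forall t, 0 < 2 * C * exp (- t / 2))
    by (intros t; apply Rmult_lt_0_compat; [lra | apply exp_pos]).
  exists (G 2). intros u Hu. unfold G in *.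
  destruct (Rle_lt_dec u 2) as [Hu2|Hu2].
  - pose proof (marcum_primitive_0_incr a Ha u 2 Hu Hu2). specialize (Hpos 2). lra.
  - specialize (Hdecr 2 u ltac:(lra) (Rlt_le _ _ Hu2)). specialize (Hpos u). lra.
Qed.

Lemma is_RInt_gen_gamma_integrand a (Fb : (R -> Prop) -> Prop) l :
  0 < a -> Filter Fb -> Fb (fun b => 0 < b) ->
  filterlim (marcum_primitive a 0) Fb (locally l) ->
  is_RInt_gen (fun t => Rpower t (a - 1) * exp (- t)) (at_right 0) Fb l.
Proof.
  intros Ha FF Hb Hl. apply is_RInt_gen_ext with (marcum_density a 0).
  - apply filter_forall. intros ab t _. unfold marcum_density.
    rewrite Rmult_0_l, bessel_phi_0. simpl. ring.
  - apply is_RInt_gen_marcum_density; auto. lra.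
Qed.

Lemma filterlim_at_point (f : R -> R) y : filterlim f (at_point y) (locally (f y)).
Proof. intros P HP. exact (locally_singleton _ _ HP). Qed.

Lemma lower_gamma_eq a y : 0 < a -> 0 < y -> lower_gamma a y = marcum_primitive a 0 y.
Proof.
  intros Ha Hy. apply is_RInt_gen_unique, is_RInt_gen_gamma_integrand;
    [exact Ha | exact _ | exact Hy | apply filterlim_at_point].
Qed.

Lemma marcum_primitive_0_Gamma a : 0 < a ->
  filterlim (marcum_primitive a 0) (Rbar_locally p_infty) (locally (Gamma_fun a)) /\
  (forall u, 0 < u -> marcum_primitive a 0 u <= Gamma_fun a).
Proof.
  intros Ha. destruct (marcum_primitive_0_bounded a Ha) as [B HB].
  destruct (incr_bounded_filterlim_p_infty _ B (marcum_primitive_0_incr a Ha) HB)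
    as [l [Hl Hle]].
  replace (Gamma_fun a) with l; [split; assumption|].
  symmetry. apply is_RInt_gen_unique, is_RInt_gen_gamma_integrand;
    [exact Ha | exact _ | exists 0; intros; assumption | exact Hl].
Qed.

Lemma Gamma_fun_pos a : 0 < a -> 0 < Gamma_fun a.
Proof.
  intros Ha. apply Rlt_le_trans with (marcum_primitive a 0 1).
  - apply marcum_primitive_pos; lra.
  - apply (marcum_primitive_0_Gamma a Ha); lra.
Qed.

Lemma Gamma_fun_S a : 0 < a -> Gamma_fun (a + 1) = a * Gamma_fun a.
Proof.
  intros Ha. destruct (marcum_primitive_0_Gamma (a + 1) ltac:(lra)) as [H1 _].
  destruct (marcum_primitive_0_Gamma a Ha) as [H2 _].
  apply (filterlim_locally_unique (F := Rbar_locally p_infty) (marcum_primitive (a + 1) 0));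
    [exact H1|].
  apply filterlim_ext_loc
    with (fun b => a * marcum_primitive a 0 b + (-1) * (Rpower b a * exp (- b))).
  { exists 0. intros b Hb. rewrite marcum_primitive_0_rec by assumption. ring. }
  replace (a * Gamma_fun a) with (a * Gamma_fun a + (-1) * 0) by ring.
  apply filterlim_Rplus; [exact _ | |];
    apply filterlim_Rmult; [exact _ | apply filterlim_const | exact H2 |
                            exact _ | apply filterlim_const | apply filterlim_Rpower_mul_exp_opp].
Qed.

Lemma Gamma_fun_pochhammer b k : 0 < b -> Gamma_fun (INR k + b) = pochhammer b k * Gamma_fun b.
Proof.
  intros Hb. induction k as [|k IH]; [simpl; rewrite Rplus_0_l; ring|].
  rewrite S_INR. replace (INR k + 1 + b) with ((INR k + b) + 1) by ring.
  rewrite Gamma_fun_S by (pose proof (pos_INR k); lra).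
  rewrite IH. simpl pochhammer. ring.
Qed.

Lemma BesselI_eq nu s : 0 < nu + 1 -> 0 < s ->
  BesselI nu (2 * sqrt s) = Rpower s (nu / 2) / Gamma_fun (nu + 1) * bessel_phi (nu + 1) s.
Proof.
  intros Hb Hs. unfold BesselI, bessel_phi, PSeries. rewrite <- Series_scal_l.
  apply Series_ext. intros k.
  replace (2 * sqrt s / 2) with (sqrt s) by field.
  rewrite <- Rpower_sqrt, Rpower_mult by exact Hs.
  replace (/ 2 * (2 * INR k + nu)) with (INR k + nu / 2) by field.
  rewrite Rpower_plus, Rpower_pow by exact Hs.
  replace (INR k + nu + 1) with (INR k + (nu + 1)) by ring.
  rewrite Gamma_fun_pochhammer by exact Hb. unfold bessel_coef.
  pose proof (INR_fact_lt_0 k). pose proof (pochhammer_pos (nu + 1) k Hb).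
  pose proof (Gamma_fun_pos _ Hb).
  unfold scal; simpl; unfold mult; simpl.
  field. repeat split; lra.
Qed.

Lemma marcum_integrand_eq mu x t : 0 < mu -> 0 < x -> 0 < t ->
  Rpower t ((mu - 1) / 2) * exp (- t - x) * BesselI (mu - 1) (2 * sqrt (x * t))
  = exp (- x) * Rpower x ((mu - 1) / 2) / Gamma_fun mu * marcum_density mu x t.
Proof.
  intros Hmu Hx Ht.
  rewrite BesselI_eq by (try apply Rmult_lt_0_compat; lra).
  replace (mu - 1 + 1) with mu by ring. unfold marcum_density.
  rewrite <- Rpower_mult_distr by assumption.
  replace (exp (- t - x)) with (exp (- t) * exp (- x)) by (rewrite <- exp_plus; f_equal; ring).
  replace (Rpower t (mu - 1)) with (Rpower t ((mu - 1) / 2) * Rpower t ((mu - 1) / 2))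
    by (rewrite <- Rpower_plus; f_equal; field).
  pose proof (Gamma_fun_pos mu Hmu). field. lra.
Qed.

Lemma MarcumP_eq mu x y : 0 < mu -> 0 <= x -> 0 < y ->
  MarcumP mu x y = exp (- x) / Gamma_fun mu * marcum_primitive mu x y.
Proof.
  intros Hmu Hx Hy. pose proof (Gamma_fun_pos _ Hmu). unfold MarcumP.
  destruct (Req_EM_T x 0) as [->|Hx0].
  { rewrite lower_gamma_eq, Ropp_0, exp_0 by assumption. field. lra. }
  assert (Hxp : 0 < x) by lra.
  set (K := exp (- x) * Rpower x ((mu - 1) / 2) / Gamma_fun mu).
  assert (HI : is_RInt_gen (fun t => Rpower t ((mu - 1) / 2) * exp (- t - x) *
                  BesselI (mu - 1) (2 * sqrt (x * t))) (at_right 0) (at_point y)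
                 (K * marcum_primitive mu x y)).
  { apply is_RInt_gen_ext with (fun t => K * marcum_density mu x t).
    - exists (fun u => 0 < u) (fun u => u = y); [exists (mkposreal 1 Rlt_0_1); auto | reflexivity|].
      intros u v Hu -> t [Ht _]. symmetry. apply marcum_integrand_eq; [exact Hmu | exact Hxp|].
      simpl in Ht. eapply Rle_lt_trans; [|exact Ht]. apply Rmin_case; lra.
    - apply (is_RInt_gen_scal (marcum_density mu x) K).
      apply is_RInt_gen_marcum_density;
        [exact Hmu | exact Hx | exact _ | exact Hy | apply filterlim_at_point]. }
  rewrite (is_RInt_gen_unique _ _ HI). unfold K.
  assert (E : Rpower x ((1 - mu) / 2) * Rpower x ((mu - 1) / 2) = 1).
  { rewrite <- Rpower_plus. replace ((1 - mu) / 2 + (mu - 1) / 2) with 0 by field.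
    apply Rpower_O; exact Hxp. }
  transitivity (Rpower x ((1 - mu) / 2) * Rpower x ((mu - 1) / 2)
                * (exp (- x) / Gamma_fun mu * marcum_primitive mu x y)); [field; lra|].
  rewrite E. ring.
Qed.

Lemma c_fun_eq mu x y : 0 < mu -> 0 <= x -> 0 < y ->
  c_fun (mu + 1) x y
  = y * bessel_phi (mu + 2) (x * y) / ((mu + 1) * bessel_phi (mu + 1) (x * y)).
Proof.
  intros Hmu Hx Hy. unfold c_fun.
  destruct (Req_EM_T x 0) as [->|Hx0].
  { rewrite Rmult_0_l, !bessel_phi_0. field. lra. }
  assert (Hxp : 0 < x) by lra. assert (Hs : 0 < x * y) by (apply Rmult_lt_0_compat; lra).
  rewrite !BesselI_eq by lra.
  replace (mu + 1 - 1 + 1) with (mu + 1) by ring.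
  replace (mu + 1 + 1) with (mu + 2) by ring.
  replace (mu + 1 - 1) with mu by ring.
  replace (mu + 2) with ((mu + 1) + 1) at 1 by ring.
  rewrite (Gamma_fun_S (mu + 1)) by lra.
  replace (Rpower (x * y) ((mu + 1) / 2)) with (Rpower (x * y) (mu / 2) * sqrt (x * y))
    by (rewrite <- Rpower_sqrt, <- Rpower_plus by exact Hs; f_equal; field).
  assert (Hsq : sqrt (y / x) * sqrt (x * y) = y).
  { rewrite <- sqrt_mult by (left; try apply Rdiv_lt_0_compat; lra).
    replace (y / x * (x * y)) with (y * y) by (field; lra). apply sqrt_square; lra. }
  pose proof (bessel_phi_pos (mu + 1) (x * y) ltac:(lra) ltac:(lra)).
  pose proof (Gamma_fun_pos (mu + 1) ltac:(lra)).
  assert (0 < Rpower (x * y) (mu / 2)) by apply exp_pos.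
  replace (y * bessel_phi (mu + 2) (x * y))
    with (sqrt (y / x) * sqrt (x * y) * bessel_phi (mu + 2) (x * y)) by now rewrite Hsq.
  field. repeat split; lra.
Qed.

Lemma is_series_marcum_bessel_prod a b x y : 0 < a -> 0 < b -> 0 <= x -> 0 <= y ->
  is_series
    (fun n => y ^ n *
       sum_f_R0 (fun k => marcum_coef a x k * (x ^ (n - k) * bessel_coef b (n - k))) n)
    (marcum_series a x y * bessel_phi b (x * y)).
Proof.
  intros Ha Hb Hx Hy.
  assert (HS := is_series_PSeries_entire _ y (CV_radius_marcum_coef a x Ha Hx)).
  assert (HP : is_series (fun k => x ^ k * bessel_coef b k * y ^ k) (bessel_phi b (x * y))).
  { eapply is_series_ext;
      [|exact (is_series_PSeries_entire _ (x * y) (CV_radius_bessel_coef b Hb))].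
    intros k. cbv beta. rewrite Rpow_mult_distr. simpl. ring. }
  eapply is_series_ext; [|apply (is_series_mult_pos _ _ _ _ HS HP)].
  - intros n. rewrite scal_sum. apply sum_eq. intros k Hk.
    replace (y ^ n) with (y ^ k * y ^ (n - k)) by (rewrite <- pow_add; f_equal; lia). ring.
  - intros n. apply Rmult_le_pos; [left; now apply marcum_coef_pos | now apply pow_le].
  - intros n. apply Rmult_le_pos; [|now apply pow_le].
    apply Rmult_le_pos; [now apply pow_le | left; now apply bessel_coef_pos].
Qed.

Section MarcumBesselInequality.

Variables mu x : R.
Hypothesis Hmu : 0 < mu.
Hypothesis Hx : 0 <= x.

Let partial_weight (k : nat) : R := exp_partial x k / pochhammer (mu + 2) k.
Let term_weight (j : nat) : R := exp_term x j / pochhammer (mu + 2) j.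

Lemma weight_cross j m : (j <= m)%nat ->
  partial_weight j * term_weight m <= partial_weight m * term_weight j.
Proof.
  intros Hjm. replace m with (j + (m - j))%nat by lia. set (n := (j + (m - j))%nat).
  pose proof (exp_partial_term_cross x j (m - j) Hx) as Hc. fold n in Hc.
  pose proof (pochhammer_pos (mu + 2) j ltac:(lra)).
  pose proof (pochhammer_pos (mu + 2) n ltac:(lra)).
  unfold partial_weight, term_weight.
  replace (exp_partial x j / pochhammer (mu + 2) j * (exp_term x n / pochhammer (mu + 2) n))
    with (exp_partial x j * exp_term x n / (pochhammer (mu + 2) j * pochhammer (mu + 2) n))
    by (field; lra).
  replace (exp_partial x n / pochhammer (mu + 2) n * (exp_term x j / pochhammer (mu + 2) j))
    with (exp_partial x n * exp_term x j / (pochhammer (mu + 2) j * pochhammer (mu + 2) n))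
    by (field; lra).
  apply Rmult_le_compat_r; [|exact Hc].
  left; apply Rinv_0_lt_compat, Rmult_lt_0_compat; assumption.
Qed.

Lemma cauchy_coef_difference k j :
  mu * marcum_coef mu x k * (x ^ j * bessel_coef (mu + 2) j)
  - (mu + 1) * (marcum_coef (mu + 1) x k * (x ^ j * bessel_coef (mu + 1) j))
  = (INR k - INR j) / (mu + 1) * partial_weight k * term_weight j.
Proof.
  unfold marcum_coef, bessel_coef, partial_weight, term_weight, exp_term.
  rewrite (pochhammer_S_shift mu k), (pochhammer_S_shift (mu + 1) k).
  replace (mu + 1 + 1) with (mu + 2) by ring.
  assert (Hshift : forall n,
    pochhammer (mu + 1) n * (mu + 1 + INR n) = (mu + 1) * pochhammer (mu + 2) n).
  { intros n. replace (mu + 2) with (mu + 1 + 1) by ring. now rewrite <- pochhammer_S_shift. }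
  pose proof (Hshift k) as Ek. pose proof (Hshift j) as Ej.
  pose proof (pochhammer_pos (mu + 1) k ltac:(lra)).
  pose proof (pochhammer_pos (mu + 1) j ltac:(lra)).
  pose proof (INR_fact_lt_0 j). pose proof (pos_INR k). pose proof (pos_INR j).
  replace (pochhammer (mu + 2) k) with (pochhammer (mu + 1) k * (mu + 1 + INR k) / (mu + 1))
    by (rewrite Ek; field; lra).
  replace (pochhammer (mu + 2) j) with (pochhammer (mu + 1) j * (mu + 1 + INR j) / (mu + 1))
    by (rewrite Ej; field; lra).
  field. repeat split; lra.
Qed.

(* Symmetrising [k <-> n - k] turns the sum into
   [1/2 sum_k (k - (n - k)) (pw k tw (n-k) - pw (n-k) tw k)], whose terms are
   nonnegative by [weight_cross]. *)
Lemma cauchy_coef_nonneg n :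
  0 <= sum_f_R0 (fun k => (INR k - INR (n - k)) * partial_weight k * term_weight (n - k)) n.
Proof.
  set (f := fun k => (INR k - INR (n - k)) * partial_weight k * term_weight (n - k)).
  assert (Hsym : 2 * sum_f_R0 f n = sum_f_R0 (fun k => (INR k - INR (n - k)) *
             (partial_weight k * term_weight (n - k) - partial_weight (n - k) * term_weight k)) n).
  { replace (2 * sum_f_R0 f n) with (sum_f_R0 f n + sum_f_R0 (fun k => f (n - k)%nat) n)
      by (rewrite sum_f_R0_skip; ring).
    rewrite <- plus_sum.
    apply sum_eq. intros k Hk. unfold f. replace (n - (n - k))%nat with k by lia. ring. }
  enough (0 <= 2 * sum_f_R0 f n) by lra.
  rewrite Hsym. apply cond_pos_sum. intros k.
  destruct (Compare_dec.le_lt_dec (n - k) k) as [Hle|Hlt].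
  - apply Rmult_le_pos; [apply le_INR in Hle; lra|].
    pose proof (weight_cross (n - k) k Hle). lra.
  - pose proof (weight_cross k (n - k) (Nat.lt_le_incl _ _ Hlt)).
    apply lt_INR in Hlt.
    replace ((INR k - INR (n - k)) *
             (partial_weight k * term_weight (n - k) - partial_weight (n - k) * term_weight k))
      with ((INR (n - k) - INR k) *
            (partial_weight (n - k) * term_weight k - partial_weight k * term_weight (n - k)))
      by ring.
    apply Rmult_le_pos; lra.
Qed.

Lemma cauchy_coef_1_pos :
  0 < sum_f_R0 (fun k => (INR k - INR (1 - k)) * partial_weight k * term_weight (1 - k)) 1.
Proof.
  simpl. unfold partial_weight, term_weight, exp_partial, exp_term. simpl.
  field_simplify; [|lra]. apply Rdiv_lt_0_compat; lra.
Qed.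

Lemma marcum_bessel_ineq y : 0 < y ->
  (mu + 1) * marcum_series (mu + 1) x y * bessel_phi (mu + 1) (x * y)
  < mu * marcum_series mu x y * bessel_phi (mu + 2) (x * y).
Proof.
  intros Hy.
  set (D := fun n =>
    sum_f_R0 (fun k => (INR k - INR (n - k)) * partial_weight k * term_weight (n - k)) n).
  assert (H1 := is_series_scal mu _ _
    (is_series_marcum_bessel_prod mu (mu + 2) x y Hmu ltac:(lra) Hx (Rlt_le _ _ Hy))).
  assert (H2 := is_series_scal (mu + 1) _ _
    (is_series_marcum_bessel_prod (mu + 1) (mu + 1) x y ltac:(lra) ltac:(lra) Hx
       (Rlt_le _ _ Hy))).
  assert (Hd : is_series (fun n => y ^ n * (/ (mu + 1) * D n))
    (mu * (marcum_series mu x y * bessel_phi (mu + 2) (x * y))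
     - (mu + 1) * (marcum_series (mu + 1) x y * bessel_phi (mu + 1) (x * y)))).
  { eapply is_series_ext; [|exact (is_series_minus _ _ _ _ H1 H2)]. intros n.
    unfold plus, opp, scal; simpl; unfold mult; simpl.
    match goal with |- mu * (_ * ?SA) + - ((mu + 1) * (_ * ?SB)) = _ =>
      replace (mu * (y ^ n * SA) + - ((mu + 1) * (y ^ n * SB)))
        with (y ^ n * (mu * SA - (mu + 1) * SB)) by ring end.
    f_equal. unfold D. rewrite !scal_sum, <- minus_sum. apply sum_eq. intros k _.
    transitivity (mu * marcum_coef mu x k * (x ^ (n - k) * bessel_coef (mu + 2) (n - k))
      - (mu + 1) * (marcum_coef (mu + 1) x k * (x ^ (n - k) * bessel_coef (mu + 1) (n - k))));
      [ring|].
    rewrite cauchy_coef_difference. field. lra. }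
  enough (0 < mu * (marcum_series mu x y * bessel_phi (mu + 2) (x * y))
              - (mu + 1) * (marcum_series (mu + 1) x y * bessel_phi (mu + 1) (x * y))) by lra.
  apply (is_series_pos _ _ 1 Hd).
  - intros n. apply Rmult_le_pos; [apply pow_le; lra|].
    apply Rmult_le_pos; [left; apply Rinv_0_lt_compat; lra | apply cauchy_coef_nonneg].
  - apply Rmult_lt_0_compat; [now apply pow_lt|].
    apply Rmult_lt_0_compat; [apply Rinv_0_lt_compat; lra | apply cauchy_coef_1_pos].
Qed.

End MarcumBesselInequality.

Lemma MarcumP_ratio mu x y : 0 < mu -> 0 <= x -> 0 < y ->
  MarcumP (mu + 1) x y / MarcumP mu x y
  = y * marcum_series (mu + 1) x y / (mu * marcum_series mu x y).
Proof.
  intros Hmu Hx Hy.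
  rewrite !MarcumP_eq, Gamma_fun_S by (assumption || lra).
  unfold marcum_primitive. rewrite Rpower_plus, Rpower_1 by exact Hy.
  pose proof (Gamma_fun_pos mu Hmu). pose proof (exp_pos (- x)). pose proof (exp_pos (- y)).
  pose proof (marcum_series_pos mu x y Hmu Hx (Rlt_le _ _ Hy)).
  assert (0 < Rpower y mu) by apply exp_pos.
  field. repeat split; lra.
Qed.

Lemma Rdiv_lt_cross a b c d : 0 < b -> 0 < d -> a * d < c * b -> a / b < c / d.
Proof.
  intros Hb Hd H. apply Rmult_lt_reg_r with (b * d); [now apply Rmult_lt_0_compat|].
  replace (a / b * (b * d)) with (a * d) by (field; lra).
  replace (c / d * (b * d)) with (c * b) by (field; lra). exact H.
Qed.

Theorem theorem3 (mu x y : R) :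
  0 < mu -> 0 <= x -> 0 < y ->
  MarcumP (mu + 1) x y / MarcumP mu x y < c_fun (mu + 1) x y.
Proof.
  intros Hmu Hx Hy.
  rewrite MarcumP_ratio, c_fun_eq by assumption.
  assert (Hxy : 0 <= x * y) by (apply Rmult_le_pos; lra).
  pose proof (marcum_series_pos mu x y Hmu Hx (Rlt_le _ _ Hy)).
  pose proof (bessel_phi_pos (mu + 1) (x * y) ltac:(lra) Hxy).
  pose proof (marcum_bessel_ineq mu x Hmu Hx y Hy).
  apply Rdiv_lt_cross; [apply Rmult_lt_0_compat; lra .. |].
  nra.
Qed.
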